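(* Let $S$ be a MANS-semigroup with $\mathrm{msg}(S)=\{n_1<n_2<\cdots<n_e\}$, where $2\leq e\leq n_1-1$, and let $\mathrm{Ap}(S,n_1)=\{w(0),w(1),\ldots,w(n_1-1)\}$ with $w(i)$ the least element of $S$ congruent to $i$ modulo $n_1$. If $n_{e+1}\in\mathbb{N}$ satisfies $n_e<n_{e+1}$, $n_e\bmod n_1<n_{e+1}\bmod n_1$, and $w(n_{e+1}\bmod n_1-1)<n_{e+1}<w(n_{e+1}\bmod n_1)$, then $S'=\langle n_1,\ldots,n_e,n_{e+1}\rangle$ is a MANS-semigroup with $\mathrm{e}(S')=\mathrm{e}(S)+1$.
   Context: $\mathbb{N}=\{0,1,2,\ldots\}$. A numerical semigroup is a subset $S\subseteq\mathbb{N}$ closed under addition, containing $0$, with $\mathbb{N}\setminus S$ finite; $\langle A\rangle$ is the submonoid generated by $A$; $\mathrm{msg}(S)$ is the unique finite minimal system of generators and $\mathrm{e}(S)=|\mathrm{msg}(S)|$. For $n\in S\setminus\{0\}$, $\mathrm{Ap}(S,n)=\{s\in S:s-n\notin S\}$. $S$ is a MANS-semigroup if $w(1)<\cdots<w(\mathrm{m}(S)-1)$, where $\mathrm{m}(S)$ is the least element of $S\setminus\{0\}$ and $w(i)$ the least element of $S$ congruent to $i$ modulo $\mathrm{m}(S)$. $a\bmod b$ is the remainder of the division of $a$ by $b$. *)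

From mathcomp Require Import all_boot.
Set Implicit Arguments. Unset Strict Implicit. Unset Printing Implicit Defensive.

Definition numerical_semigroup (S : nat -> Prop) : Prop :=
  [/\ S 0, (forall x y, S x -> S y -> S (x + y))
    & exists N, forall n, N <= n -> S n].

Inductive gen (A : seq nat) : nat -> Prop :=
| gen0 : gen A 0
| genS : forall x a, a \in A -> gen A x -> gen A (x + a).

Definition is_msg (S : nat -> Prop) (A : seq nat) : Prop :=
  [/\ uniq A, (forall x, gen A x <-> S x)
    & forall B : seq nat, {subset B <= A} -> (exists2 a, a \in A & a \notin B) ->
        ~ (forall x, gen B x <-> S x)].

Definition is_least (P : nat -> Prop) (x : nat) : Prop :=
  P x /\ forall y, P y -> x <= y.

Definition is_mult (S : nat -> Prop) (m : nat) : Prop :=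
  is_least (fun x => S x /\ 0 < x) m.

Definition is_w (S : nat -> Prop) (m i w : nat) : Prop :=
  is_least (fun x => S x /\ x %% m = i %% m) w.

Definition MANS (S : nat -> Prop) : Prop :=
  numerical_semigroup S /\
  forall m, is_mult S m ->
    forall i j wi wj, 1 <= i -> i < j -> j < m ->
      is_w S m i wi -> is_w S m j wj -> wi < wj.

(* Let m = n_1.  A numerical semigroup T with multiplicity m is a MANS-semigroup
   as soon as it has the residue descent property: every s in T with
   s mod m >= 2 lies above some t in T with t mod m = s mod m - 1 (iterating,
   w(j) lies above an element of residue i for every 1 <= i < j, hence above
   w(i)).  A MANS-semigroup has this property, witnessed by w(s mod m - 1).
   In S' = <S, x> a new element is s + x with s in S', and it descends to
   s + w(x mod m - 1) because w(x mod m - 1) < x.  Minimality of the generators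
   is inherited from S, since x is smaller than w(x mod m) and so x is not in S,
   while the old generators are smaller than x and cannot use it. *)

From mathcomp Require Import all_boot zify.
From Stdlib Require Import Classical.

Set Implicit Arguments.
Unset Strict Implicit.
Unset Printing Implicit Defensive.

Section Generated.
Variable A : seq nat.

Lemma gen_add u v : gen A u -> gen A v -> gen A (u + v).
Proof.
move=> Au; elim=> [|y a a_in _ IH]; first by rewrite addn0.
by rewrite addnA; apply: genS.
Qed.

Lemma gen_mem a : a \in A -> gen A a.
Proof. by move=> a_in; rewrite -[a]add0n; apply: genS a_in (gen0 _). Qed.

Lemma gen_eq0_or_ge c u : {in A, forall a, c <= a} -> gen A u -> u = 0 \/ c <= u.
Proof.
move=> c_le; elim=> [|y a a_in _ _]; first by left.
by right; have := c_le a a_in; lia.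
Qed.

Lemma gen_filter_ltn c u : gen A u -> u < c -> gen [seq a <- A | a < c] u.
Proof.
elim=> [|y a a_in _ IH] lt_c; first exact: gen0.
apply: genS; last by apply: IH; lia.
by rewrite mem_filter a_in andbT; lia.
Qed.

End Generated.

Lemma gen_subgen A C u : {in A, forall a, gen C a} -> gen A u -> gen C u.
Proof.
move=> genC; elim=> [|y a a_in _ IH]; first exact: gen0.
exact: gen_add IH (genC a a_in).
Qed.

Lemma gen_sub A C u : {subset A <= C} -> gen A u -> gen C u.
Proof. by move=> sAC; apply: gen_subgen => a /sAC/gen_mem. Qed.

Lemma subset_rcons (A : seq nat) x : {subset A <= rcons A x}.
Proof. by move=> a a_in; rewrite mem_rcons inE a_in orbT. Qed.

Lemma gen_rcons_sub A x u : gen A u -> gen (rcons A x) u.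
Proof. exact/gen_sub/subset_rcons. Qed.

Lemma gen_rconsP A x u :
  gen (rcons A x) u -> gen A u \/ exists2 v, gen (rcons A x) v & u = v + x.
Proof.
elim=> [|y a a_in gen_y IH]; first by left; exact: gen0.
move: a_in; rewrite mem_rcons inE => /predU1P[->|a_in]; first by right; exists y.
case: IH => [Ay|[v gen_v ->]]; first by left; exact: genS a_in Ay.
right; exists (v + a); last by rewrite addnAC.
exact: genS (subset_rcons x a_in) gen_v.
Qed.

Lemma gen_filter_neq A a u :
  gen [seq y <- A | y != a] a -> gen A u -> gen [seq y <- A | y != a] u.
Proof.
move=> gen_a; apply: gen_subgen => y y_in.
by have [-> // | y_neq_a] := eqVneq y a; apply: gen_mem; rewrite mem_filter y_neq_a.
Qed.

Lemma numerical_semigroup_gen S A :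
  numerical_semigroup S -> (forall u, S u -> gen A u) -> numerical_semigroup (gen A).
Proof.
move=> [_ _ [N S_ge]] S_gen; split; first exact: gen0.
  by move=> u v; apply: gen_add.
by exists N => n /S_ge/S_gen.
Qed.

Lemma gen_mult S A m :
  (forall u, gen A u <-> S u) -> m \in A -> 0 < m -> {in A, forall a, m <= a} ->
  is_mult S m.
Proof.
move=> gen_S m_in m_gt0 m_le; split; first by split => //; apply/gen_S/gen_mem.
by move=> y [/gen_S Ay y_gt0]; case: (gen_eq0_or_ge m_le Ay) => //; lia.
Qed.

Lemma sorted_ltn_bounds s :
  sorted ltn s -> {in s, forall y, nth 0 s 0 <= y <= last 0 s}.
Proof.
case: s => [//|h t] /=; elim: t h => [|a t IH] h /=.
  by move=> _ y; rewrite inE => /eqP->; rewrite leqnn.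
move=> /andP[h_lt_a path_a] y; rewrite inE => /predU1P[->|y_in].
  by have := IH a path_a a (mem_head _ _); lia.
by have := IH a path_a y y_in; lia.
Qed.

Lemma is_least_exists (P : nat -> Prop) n : P n -> exists w, is_least P w.
Proof.
elim/ltn_ind: n => n IH Pn.
case: (classic (exists2 y, y < n & P y)) => [[y lt_n Py]|no_less]; first exact: IH Py.
exists n; split => // y Py; case: (ltnP y n) => // lt_n.
by case: no_less; exists y.
Qed.

Lemma is_least_unique (P : nat -> Prop) x y : is_least P x -> is_least P y -> x = y.
Proof. by move=> [Px x_le] [Py y_le]; apply/eqP; rewrite eqn_leq x_le ?y_le. Qed.

Lemma is_w_exists S m i : numerical_semigroup S -> 0 < m -> exists w, is_w S m i w.
Proof.
move=> [_ _ [N S_ge]] m_gt0; apply: (@is_least_exists _ (N * m + i)); split.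
  by apply: S_ge; nia.
by rewrite modnMDl.
Qed.

Definition residue_descent (S : nat -> Prop) (m : nat) : Prop :=
  forall s, S s -> 2 <= s %% m -> exists2 t, S t & t < s /\ (t %% m).+1 = s %% m.

Section ResidueDescent.
Variables (S : nat -> Prop) (m : nat).

Lemma MANS_residue_descent : MANS S -> is_mult S m -> residue_descent S m.
Proof.
move=> [nsS MANS_S] multS s Ss r_ge2.
have m_gt0 : 0 < m by case: multS => -[].
have [wr wr_w] : exists w, is_w S m (s %% m) w.
  exact: is_least_exists (conj Ss (esym (modn_mod s m))).
have [wp wp_w] := is_w_exists (s %% m).-1 nsS m_gt0.
have lt_wp_wr : wp < wr.
  by apply: MANS_S multS _ _ _ _ _ _ (ltn_pmod s m_gt0) wp_w wr_w; lia.
have wr_le : wr <= s := wr_w.2 s (conj Ss (esym (modn_mod s m))).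
have wp_mod : wp %% m = (s %% m).-1.
  by case: wp_w => -[_ ->] _; rewrite modn_small //; have := ltn_pmod s m_gt0; lia.
by exists wp; [exact: wp_w.1.1 | split; lia].
Qed.

Hypothesis descent : residue_descent S m.

Lemma residue_descent_iter d s i :
  S s -> 0 < i -> s %% m = i + d -> exists2 t, S t & t <= s /\ t %% m = i.
Proof.
elim: d s => [|d IH] s Ss i_gt0 s_mod; first by exists s; rewrite ?s_mod ?addn0.
have [t1 St1 [t1_lt t1_mod]] := descent Ss (ltac:(lia) : 2 <= s %% m).
have [t St [t_le t_mod]] := IH t1 St1 i_gt0 (ltac:(lia) : t1 %% m = i + d).
by exists t => //; split; lia.
Qed.

Lemma residue_descent_MANS : numerical_semigroup S -> is_mult S m -> MANS S.
Proof.
move=> nsS multS; split => // m' mult' i j wi wj i_gt0 lt_ij lt_jm wi_w wj_w.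
have em := is_least_unique mult' multS; subst m'.
case: (wj_w) => -[Swj wj_mod] _; rewrite (modn_small lt_jm) in wj_mod.
have [t St [t_le t_mod]] := residue_descent_iter Swj i_gt0 (ltac:(lia) : wj %% m = i + (j - i)).
have t_res : t %% m = i %% m by rewrite t_mod modn_small //; lia.
have wi_le := wi_w.2 t (conj St t_res).
have t_lt : t < wj.
  by rewrite ltn_neqAle t_le andbT; apply/eqP => t_wj; move: t_mod; rewrite t_wj; lia.
exact: leq_ltn_trans wi_le t_lt.
Qed.

End ResidueDescent.

Lemma modn_succ_addl m v a b :
  (a %% m).+1 = b %% m -> 0 < (v + b) %% m -> ((v + a) %% m).+1 = (v + b) %% m.
Proof.
move=> ab vb_gt0.
have vb : (v + b) %% m = (v + a).+1 %% m.
  rewrite -modnDmr -ab addnS -[(v + a %% m).+1]addn1 -[(v + a).+1]addn1.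
  by rewrite -(modnDml (v + a %% m)) -(modnDml (v + a)) modnDmr.
by move: vb_gt0; rewrite vb modnS; case: ifP.
Qed.

Lemma residue_descent_rcons S A x m t :
  (forall u, gen A u <-> S u) -> residue_descent S m ->
  S t -> t < x -> (t %% m).+1 = x %% m -> residue_descent (gen (rcons A x)) m.
Proof.
move=> gen_S descent St t_lt t_succ u /gen_rconsP[Au|[v gen_v ->]] u_mod.
  have [t' St' t'_desc] := descent u (proj1 (gen_S u) Au) u_mod.
  by exists t' => //; apply/gen_rcons_sub/gen_S.
exists (v + t); first by apply: gen_add gen_v _; apply/gen_rcons_sub/gen_S.
by split; [lia | apply: modn_succ_addl t_succ _; lia].
Qed.

Lemma is_msg_rcons S A x :
  is_msg S A -> {in A, forall a, a < x} -> ~ S x ->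
  is_msg (gen (rcons A x)) (rcons A x).
Proof.
move=> [uniqA gen_S minA] lt_x notSx; split => //.
  by rewrite rcons_uniq uniqA andbT; apply/negP => /lt_x; rewrite ltnn.
move=> B sub_B [a a_in a_notin_B] gen_B.
have B_sub : {in B, forall y, y != x -> y \in A}.
  by move=> y /sub_B; rewrite mem_rcons inE => /predU1P[->|//]; rewrite eqxx.
move: a_in; rewrite mem_rcons inE => /predU1P[a_x | a_in].
  subst a; apply/notSx/gen_S; apply: (@gen_sub B).
    by move=> y y_in; apply: B_sub (y_in) _; apply: contraNneq _ a_notin_B => <-.
  by apply/gen_B/gen_mem; rewrite mem_rcons mem_head.
have /gen_filter_ltn/(_ (lt_x a a_in)) gen_B_a : gen B a.
  exact/gen_B/gen_mem/subset_rcons.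
apply: (minA [seq y <- A | y != a]).
- by move=> y; rewrite mem_filter => /andP[].
- by exists a; rewrite // mem_filter eqxx.
move=> u; split => [/(gen_sub (C := A)) gen_A_u | /gen_S].
  by apply/gen_S/gen_A_u => y; rewrite mem_filter => /andP[].
apply: gen_filter_neq; apply: gen_sub gen_B_a => z; rewrite !mem_filter => /andP[z_lt z_B].
rewrite B_sub ?andbT //; last by rewrite neq_ltn z_lt.
by apply: contraNneq _ a_notin_B => <-.
Qed.

Theorem lemma4p1 (S : nat -> Prop) (ns : seq nat) (x : nat) :
  MANS S ->
  sorted ltn ns ->
  is_msg S ns ->
  2 <= size ns <= nth 0 ns 0 - 1 ->
  last 0 ns < x ->
  last 0 ns %% nth 0 ns 0 < x %% nth 0 ns 0 ->
  (forall wa wb,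
      is_w S (nth 0 ns 0) (x %% nth 0 ns 0 - 1) wa ->
      is_w S (nth 0 ns 0) (x %% nth 0 ns 0) wb ->
      wa < x < wb) ->
  MANS (gen (rcons ns x)) /\
  exists2 A', is_msg (gen (rcons ns x)) A' & size A' = (size ns).+1.
Proof.
move=> MANS_S sorted_ns msg_ns /andP[size_ge2 size_le] last_lt_x lt_mod x_between.
have nsS := MANS_S.1; have [_ gen_S _] := msg_ns.
have ns_bounds := sorted_ltn_bounds sorted_ns.
have m_in : nth 0 ns 0 \in ns by apply/(mem_nth 0)/ltnW.
set m := nth 0 ns 0 in ns_bounds m_in size_le lt_mod x_between; clearbody m.
have m_gt0 : 0 < m by lia.
have ns_lt_x : {in ns, forall a, a < x} by move=> a /ns_bounds; lia.
have m_le : {in ns, forall a, m <= a} by move=> a /ns_bounds/andP[].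
have [wa wa_w] := is_w_exists (x %% m - 1) nsS m_gt0.
have [wb wb_w] := is_w_exists (x %% m) nsS m_gt0.
have /andP[wa_lt_x x_lt_wb] := x_between _ _ wa_w wb_w.
have notSx : ~ S x by move=> Sx; have := wb_w.2 x (conj Sx (esym (modn_mod x m))); lia.
(* lt_mod gives 0 < x %% m, so the truncated subtraction in x %% m - 1 is exact. *)
have wa_succ : (wa %% m).+1 = x %% m.
  by case: wa_w => -[_ ->] _; rewrite modn_small; have := ltn_pmod x m_gt0; lia.
split; last by exists (rcons ns x); [exact: is_msg_rcons msg_ns ns_lt_x notSx | rewrite size_rcons].
apply: residue_descent_MANS.
- apply: residue_descent_rcons (gen_S) _ wa_w.1.1 wa_lt_x wa_succ.
  exact: MANS_residue_descent MANS_S (gen_mult gen_S m_in m_gt0 m_le).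
- by apply: numerical_semigroup_gen nsS _ => u /gen_S/gen_rcons_sub.
- apply: (gen_mult (fun u => iff_refl _) _ m_gt0); first exact: subset_rcons.
  by move=> a; rewrite mem_rcons inE => /predU1P[->|/m_le//]; rewrite ltnW ?ns_lt_x.
Qed.
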